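(* Let $k\ge 1$ be an integer. For any graph $G$ with minimum degree $\delta(G)\ge k$, $\mathrm{TC}_k(G)\ge \delta(G)-k+2$. This bound is sharp, i.e., there exist graphs attaining equality.
   Context: All graphs are finite, simple and connected. $N(v)$ denotes the open neighborhood of a vertex $v$. For a graph $G$ with $\delta(G)\ge k$, a set $S\subseteq V(G)$ is a total $k$-dominating set if $|N(v)\cap S|\ge k$ for every $v\in V(G)$. Two disjoint sets $U,W\subseteq V(G)$ form a total $k$-coalition if neither $U$ nor $W$ is a total $k$-dominating set, but $U\cup W$ is. A total $k$-coalition partition of $G$ is a partition $\Omega$ of $V(G)$ such that every set in $\Omega$ forms a total $k$-coalition with some other set in $\Omega$. The total $k$-coalition number $\mathrm{TC}_k(G)$ is the maximum cardinality of a total $k$-coalition partition of $G$. *)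

From mathcomp Require Import all_boot.
Set Implicit Arguments. Unset Strict Implicit. Unset Printing Implicit Defensive.

Definition simple_graph (T : finType) (e : rel T) : Prop :=
  symmetric e /\ irreflexive e.

Definition connected_graph (T : finType) (e : rel T) : Prop :=
  forall x y : T, connect e x y.

Definition nbhd (T : finType) (e : rel T) (v : T) : {set T} := [set u | e v u].

(* minimum degree delta(G) (equals 0 only for the empty vertex set) *)
Definition min_degree (T : finType) (e : rel T) : nat :=
  \big[minn/#|T|]_(v : T) #|nbhd e v|.

Definition total_kdom (T : finType) (e : rel T) (k : nat) (S : {set T}) : bool :=
  [forall v : T, k <= #|nbhd e v :&: S|].

Definition total_kcoalition (T : finType) (e : rel T) (k : nat) (U W : {set T}) : bool :=
  [&& [disjoint U & W], ~~ total_kdom e k U, ~~ total_kdom e k W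
    & total_kdom e k (U :|: W)].

Definition tkc_partition (T : finType) (e : rel T) (k : nat) (P : {set {set T}}) : bool :=
  partition P [set: T] &&
  [forall U in P, exists W in P, total_kcoalition e k U W].

Definition TC (T : finType) (e : rel T) (k : nat) : nat :=
  \max_(P : {set {set T}} | tkc_partition e k P) #|P|.

From mathcomp Require Import all_boot order zify.
Set Implicit Arguments. Unset Strict Implicit. Unset Printing Implicit Defensive.
Import Order.TTheory.

(* Let v be a vertex of minimum degree d and A a set of d - k + 1 neighbours
   of v.  The complement of A leaves v with only k - 1 neighbours, and a
   singleton never dominates its own vertex; but adding any x in A to the
   complement leaves only d - k vertices outside, so every vertex keeps at
   least k neighbours inside.  Hence the complement of A together with the
   singletons of A is a total k-coalition partition with d - k + 2 blocks.
   In K_(k+1) the whole vertex set is the only total k-dominating set, so a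
   coalition partition has at most two blocks. *)

Section MinDegree.
Variables (T : finType) (e : rel T).

Lemma min_degree_le v : min_degree e <= #|nbhd e v|.
Proof. by rewrite /min_degree -minEnat -leEnat; exact: bigmin_le. Qed.

Lemma min_degree_le_card : min_degree e <= #|T|.
Proof. by rewrite /min_degree -minEnat -leEnat; exact: bigmin_le_id. Qed.

Lemma min_degree_attained (w : T) : exists v, min_degree e = #|nbhd e v|.
Proof.
rewrite /min_degree -minEnat.
have [v _ ->] := @eq_bigmin _ nat T #|T| w predT (fun v => #|nbhd e v|) isT
  (fun v _ => max_card _).
by exists v.
Qed.

End MinDegree.

Lemma subset_of_card (T : finType) (A : {set T}) n :
  n <= #|A| -> exists2 B : {set T}, B \subset A & #|B| = n.
Proof.
rewrite -bin_gt0 -cards_draws => /card_gt0P[B].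
by rewrite inE => /andP[sBA /eqP cardB]; exists B.
Qed.

Section Partitions.
Variable T : finType.
Implicit Types (A D U W : {set T}) (P : {set {set T}}).

Lemma partition_set1 A : partition [set [set x] | x in A] A.
Proof.
apply/and3P; split.
- apply/eqP/setP => y; apply/bigcupP/idP => [[_ /imsetP[x xA ->]] | yA].
    by rewrite inE => /eqP->.
  by exists [set y]; [exact: imset_f | rewrite set11].
- apply/trivIsetP => _ _ /imsetP[x _ ->] /imsetP[y _ ->] neq_xy.
  by rewrite disjoints1 inE; apply: contraNneq neq_xy => ->.
- by apply/imsetP => -[x _ /setP/(_ x)]; rewrite !inE eqxx.
Qed.

Lemma partition_setC_set1 A :
  A != setT -> partition (~: A |: [set [set x] | x in A]) [set: T].
Proof.
move=> AnT; rewrite -(setUCr A) [A :|: _]setUC; apply: partitionU1 (partition_set1 A) _ _.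
- by apply: contraNneq AnT => CA0; rewrite -[A]setCK CA0 setC0.
- by rewrite disjoint_sym -subsets_disjoint.
Qed.

Lemma card_setC_set1 A : #|~: A |: [set [set x] | x in A]| = #|A|.+1.
Proof.
have CA_notin : ~: A \notin [set [set x] | x in A].
  apply/imsetP => -[x xA CAx].
  by have := set11 x; rewrite -CAx inE xA.
by rewrite cardsU1 CA_notin card_imset //; exact: set1_inj.
Qed.

Lemma partition_card_le2 P D U W :
  partition P D -> U \in P -> W \in P -> D \subset U :|: W -> #|P| <= 2.
Proof.
case/and3P => /eqP covP trivP P_0 UP WP sD.
have sP : P \subset [set U; W].
  apply/subsetP => Z ZP; have /set0Pn[z zZ] : Z != set0.
    by apply: contraNneq P_0 => <-.
  have : z \in U :|: W by apply: (subsetP sD); rewrite -covP; apply/bigcupP; exists Z.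
  rewrite !inE -(def_pblock trivP ZP zZ) => /orP[zU | zW].
    by rewrite (def_pblock trivP UP zU) eqxx.
  by rewrite (def_pblock trivP WP zW) eqxx orbT.
by apply: leq_trans (subset_leq_card sP) _; rewrite cards2; case: (U != W).
Qed.

End Partitions.

Section Coalitions.
Variables (T : finType) (e : rel T) (k : nat).

Lemma total_kcoalitionC (U W : {set T}) :
  total_kcoalition e k U W = total_kcoalition e k W U.
Proof.
rewrite /total_kcoalition disjoint_sym setUC.
by case: (total_kdom e k U); case: (total_kdom e k W); rewrite ?andbF.
Qed.

Lemma leq_TC P : tkc_partition e k P -> #|P| <= TC e k.
Proof. exact: leq_bigmax_cond. Qed.

Lemma TC_le2 : (forall S, total_kdom e k S -> S = setT) -> TC e k <= 2.
Proof.
move=> only_full; apply/bigmax_leqP => P /andP[partP /forallP coalP].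
have [-> | [U UP]] := set_0Vmem P; first by rewrite cards0.
have /existsP[W /andP[WP /and4P[_ _ _ /only_full UW]]] := implyP (coalP U) UP.
by apply: partition_card_le2 partP UP WP _; rewrite UW.
Qed.

Lemma total_kdom_small_compl S : #|~: S| + k <= min_degree e -> total_kdom e k S.
Proof.
move=> small_compl; apply/forallP => u.
have := cardsID S (nbhd e u); have := min_degree_le e u.
have : #|nbhd e u :\: S| <= #|~: S| by apply/subset_leq_card; rewrite setDE subsetIr.
lia.
Qed.

Lemma not_total_kdom_setC v (A : {set T}) :
  A \subset nbhd e v -> #|nbhd e v| < #|A| + k -> ~~ total_kdom e k (~: A).
Proof.
move=> sA small_deg; rewrite /total_kdom negb_forall; apply/existsP; exists v.
by rewrite -ltnNge -setDE cardsD (setIidPr sA) ltn_subLR ?subset_leq_card.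
Qed.

Lemma set1_not_total_kdom x : irreflexive e -> 0 < k -> ~~ total_kdom e k [set x].
Proof.
move=> irr k_gt0; rewrite /total_kdom negb_forall; apply/existsP; exists x.
suff -> : nbhd e x :&: [set x] = set0 by rewrite cards0 -ltnNge.
by apply/setP => y; rewrite !inE; case: eqP => [-> | _]; rewrite ?irr ?andbF.
Qed.

End Coalitions.

Section Construction.
Variables (T : finType) (e : rel T) (k : nat) (v : T) (A : {set T}).
Hypotheses (e_irr : irreflexive e) (k_gt0 : 0 < k) (k_le_d : k <= min_degree e).
Hypotheses (sA : A \subset nbhd e v) (deg_v : #|nbhd e v| = min_degree e).
Hypothesis cardA : #|A| + k = (min_degree e).+1.

Lemma setC_not_total_kdom : ~~ total_kdom e k (~: A).
Proof. by apply: not_total_kdom_setC sA _; rewrite deg_v cardA. Qed.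

Lemma setU1C_total_kdom x : x \in A -> total_kdom e k (x |: ~: A).
Proof.
move=> xA; apply: total_kdom_small_compl.
rewrite setCU setCK setIC -setDE; have := cardsD1 x A; rewrite xA; lia.
Qed.

Lemma coalition_set1_setC x : x \in A -> total_kcoalition e k [set x] (~: A).
Proof.
move=> xA; apply/and4P; split.
- by rewrite disjoints1 inE negbK.
- exact: set1_not_total_kdom.
- exact: setC_not_total_kdom.
- exact: setU1C_total_kdom.
Qed.

Lemma tkc_partition_setC_set1 : tkc_partition e k (~: A |: [set [set x] | x in A]).
Proof.
have AnT : A != setT.
  by apply/negP => /eqP AT; have := subsetP sA v; rewrite AT !inE e_irr => /(_ isT).
have /card_gt0P[x0 x0A] : 0 < #|A| by lia.
apply/andP; split; first exact: partition_setC_set1.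
apply/forallP => U; apply/implyP; rewrite !inE => /orP[/eqP-> | /imsetP[x xA ->]].
- apply/existsP; exists [set x0].
  by rewrite total_kcoalitionC coalition_set1_setC // !inE imset_f ?orbT.
- by apply/existsP; exists (~: A); rewrite !inE eqxx coalition_set1_setC.
Qed.

End Construction.

Lemma TC_ge_min_degree (T : finType) (e : rel T) k :
  irreflexive e -> 0 < k -> k <= min_degree e -> min_degree e - k + 2 <= TC e k.
Proof.
move=> e_irr k_gt0 k_le_d.
have /card_gt0P[w _] : 0 < #|T|.
  exact: leq_trans k_gt0 (leq_trans k_le_d (min_degree_le_card e)).
have [v /esym deg_v] := min_degree_attained e w.
have [A sA cardA] : exists2 A : {set T}, A \subset nbhd e v & #|A| = min_degree e - k + 1.
  by apply: subset_of_card; rewrite deg_v; lia.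
have cardAk : #|A| + k = (min_degree e).+1 by lia.
have -> : min_degree e - k + 2 = #|A|.+1 by rewrite cardA addn1 addn2.
rewrite -card_setC_set1.
exact: leq_TC (tkc_partition_setC_set1 e_irr k_gt0 k_le_d sA deg_v cardAk).
Qed.

Section CompleteGraph.
Variable T : finType.

Definition complete_graph : rel T := fun x y => x != y.

Lemma nbhd_complete v : nbhd complete_graph v = [set~ v].
Proof. by apply/setP => u; rewrite !inE eq_sym. Qed.

Lemma complete_simple : simple_graph complete_graph.
Proof. by split => [x y | x]; rewrite /complete_graph ?eqxx // eq_sym. Qed.

Lemma complete_connected : connected_graph complete_graph.
Proof.
by move=> x y; case: (eqVneq x y) => [-> | neq_xy]; [exact: connect0 | exact: connect1].
Qed.

Lemma min_degree_complete (w : T) : min_degree complete_graph = #|T|.-1.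
Proof.
by have [v ->] := min_degree_attained complete_graph w; rewrite nbhd_complete cardsC1.
Qed.

Lemma total_kdom_complete S :
  1 < #|T| -> total_kdom complete_graph #|T|.-1 S -> S = setT.
Proof.
move=> T_gt1 /forallP domS; apply/setP => w; rewrite inE.
have /card_gt0P[y yw] : 0 < #|[set~ w]| by rewrite cardsC1; lia.
have full : [set~ y] :&: S = [set~ y].
  by apply/eqP; rewrite eqEcard subsetIl cardsC1 -nbhd_complete domS.
have : w \in [set~ y] :&: S by rewrite full !inE eq_sym -in_setC1.
by rewrite inE => /andP[].
Qed.

Lemma TC_complete : 1 < #|T| -> TC complete_graph #|T|.-1 = 2.
Proof.
move=> T_gt1; have /card_gt0P[w _] : 0 < #|T| by lia.
apply/eqP; rewrite eqn_leq TC_le2 => [/= | S]; last exact: total_kdom_complete.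
have := TC_ge_min_degree (proj2 complete_simple) (_ : 0 < #|T|.-1).
by rewrite (min_degree_complete w) leqnn subnn; apply; lia.
Qed.

End CompleteGraph.

Theorem theorem3p1 (k : nat) (hk : 1 <= k) :
  (forall (T : finType) (e : rel T),
      simple_graph e -> connected_graph e -> k <= min_degree e ->
      min_degree e - k + 2 <= TC e k)
  /\
  (exists (T : finType) (e : rel T),
      [/\ simple_graph e, connected_graph e, k <= min_degree e &
          TC e k = min_degree e - k + 2]).
Proof.
split => [T e [_ e_irr] _ | ]; first exact: TC_ge_min_degree.
have d_K : min_degree (@complete_graph 'I_k.+1) = k.
  by rewrite (min_degree_complete ord0) card_ord.
exists 'I_k.+1, (@complete_graph _); split.
- exact: complete_simple.
- exact: complete_connected.
- by rewrite d_K.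
- by rewrite d_K subnn; have := @TC_complete 'I_k.+1; rewrite card_ord; apply.
Qed.
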